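(* Let $m$ be a positive integer and let $q\ge m+1$ be a prime power. Then there exists an (explicitly constructible) family $\{(A_i,S_i)\}_{i=1}^{2m}$, where each $A_i$ is an invertible $2^m\times 2^m$ matrix over $\mathbb{F}_q$ and each $S_i$ is a subspace of $\mathbb{F}_q^{2^m}$ of dimension $2^{m-1}$, which satisfies the subspace condition with $r=2$ and $\ell=2^m$.
   Context: Vectors are row vectors and matrices act on the right: for a subspace $S\subseteq\mathbb{F}_q^\ell$ and an $\ell\times\ell$ matrix $M$, $SM=\{sM: s\in S\}$; $U+V=\{u+v:u\in U,v\in V\}$. Let $r,\ell$ be integers with $r\mid\ell$. A family $\{(A_i,S_i)\}_{i=1}^k$, where each $A_i$ is an invertible $\ell\times\ell$ matrix over $\mathbb{F}_q$ and each $S_i$ is an $(\ell/r)$-dimensional subspace of $\mathbb{F}_q^\ell$, satisfies the subspace condition (for $r$ and $\ell$) if: (Independence) for every $i$, $S_i+S_iA_i+S_iA_i^2+\dots+S_iA_i^{r-1}=\mathbb{F}_q^\ell$; (Invariance) for all $i\ne j$, $S_iA_j=S_i$; (Nonsingularity) every square block submatrix (obtained by choosing $t$ block rows and $t$ block columns, for any $t$) of the $k\times r$ block matrix whose $(i,j)$ block is $A_i^{j}$, $i=1,\dots,k$, $j=0,\dots,r-1$ (with $A_i^0=I$), is invertible. *)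

From HB Require Import structures.
From mathcomp Require Import all_boot all_order all_algebra.
Set Implicit Arguments. Unset Strict Implicit. Unset Printing Implicit Defensive.
Import GRing.Theory.
Local Open Scope ring_scope.

(* Subspaces of F^l are represented as row spaces of l x l matrices (mxalgebra).
   S *m A is the matrix whose row space is SA = {sA : s in S}. *)

Definition block_submx (F : fieldType) (l k r t : nat)
  (A : 'I_k -> 'M[F]_l) (f : 'I_t -> 'I_k) (g : 'I_t -> 'I_r)
  : 'M[F]_(\sum_(a < t) l, \sum_(b < t) l) :=
  \mxblock_(a < t, b < t) (A (f a) ^+ (g b)).

Definition subspace_condition (F : fieldType) (r l k : nat)
  (A : 'I_k -> 'M[F]_l) (S : 'I_k -> 'M[F]_l) : Prop :=
  (r %| l)%N /\
  (forall i, A i \in unitmx) /\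
  (forall i, \rank (S i) = (l %/ r)%N) /\
  (forall i, (\sum_(j < r) (S i *m A i ^+ j) == 1%:M)%MS) /\
  (forall i j, i != j -> (S i *m A j == S i)%MS) /\
  (forall (t : nat) (f : 'I_t -> 'I_k) (g : 'I_t -> 'I_r),
     injective f -> injective g -> block_submx A f g \in unitmx).

From HB Require Import structures.
From mathcomp Require Import all_boot all_order all_algebra zify.
Set Implicit Arguments. Unset Strict Implicit. Unset Printing Implicit Defensive.
Import GRing.Theory.
Local Open Scope ring_scope.

(* Index the coordinates of F^(2^m) by bit strings of length m, and let N p b
   be the partial permutation matrix setting bit p to b (and killing the
   strings whose bit p already is b).  These satisfy N p b ^ 2 = 0,
   N p b N p ~b + N p ~b N p b = 1, and operators at different positions
   commute.  For distinct nonzero scalars lam p, put A = lam p + N p b and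
   S = N p b N p ~b, an idempotent of rank 2^(m-1).  Then S + S A contains
   N p b, hence N p ~b N p b, hence everything; S is killed by N p ~b and
   commutes with the A's at other positions, which gives invariance.  Each A_i,
   and each A_i - A_j unless it is N p b - N p ~b (whose square is -1), is a
   nonzero scalar plus a nilpotent, hence invertible.  Since r = 2, the block
   condition only asks for the invertibility of A_i and of the block matrix
   [1 A_i; 1 A_j], i.e. of A_i - A_j. *)

Lemma unitmx_scalar_add_nilpotent (F : fieldType) n k (c : F) (M : 'M[F]_n) :
  c != 0 -> M ^+ k = 0 -> c%:M + M \in unitmx.
Proof.
move=> c0 Mk.
have cM : GRing.comm (c%:M : 'M_n) (- M) by rewrite /GRing.comm -!mulmxE scalar_mxC.
have := subrXX_comm k cM; rewrite exprNn Mk mulr0 subr0 opprK -(rmorphXn (@scalar_mx F n)).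
move=> /(congr1 (fun B => (c ^+ k)^-1 *: B)); rewrite scale_scalar_mx mulVf ?expf_neq0 //.
by rewrite -mulmxE scalemxAr => /esym/mulmx1_unit [].
Qed.

Lemma nilpotent_addr_comm (R : pzRingType) (x y : R) (a b : nat) :
  GRing.comm x y -> x ^+ a = 0 -> y ^+ b = 0 -> (x + y) ^+ (a + b).-1 = 0.
Proof.
move=> cxy xa yb; rewrite exprDn_comm // big1 // => i _.
have [ltib|leib] := ltnP i b; last by rewrite -(subnK leib) exprD yb !mulr0 mul0rn.
have leai : (a <= (a + b).-1 - i)%N by lia.
by rewrite -(subnK leai) exprD xa mulr0 mul0r mul0rn.
Qed.

Section BlockInverse.
Variables (F : fieldType) (n : nat).

Lemma mxblock_unit_linv t (X Y : 'I_t -> 'I_t -> 'M[F]_n) :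
  (forall a c, \sum_j Y a j *m X j c = if a == c then 1%:M else 0) ->
  \mxblock_(a < t, b < t) X a b \in unitmx.
Proof.
move=> YX.
suff: \mxblock_(a < t, b < t) Y a b *m \mxblock_(a < t, b < t) X a b = 1%:M.
  by case/mulmx1_unit.
rewrite mul_mxblock -(mxdiagZ (p_ := fun=> n)) /mxdiag.
by apply: eq_mxblock => a c; rewrite YX; case: eqP => // _; rewrite conform_mx_id.
Qed.

Lemma sum_ord2 (G : 'I_2 -> 'M[F]_n) : \sum_(j < 2) G j = G ord0 + G ord_max.
Proof. by rewrite big_ord_recl big_ord1; congr (_ + G _); apply: val_inj. Qed.

(* W is the left inverse [-QD, 1 + QD; D, -D] of [1 P; 1 Q], D = (P - Q)^-1;
   permuting the columns by g permutes the rows of W. *)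
Lemma mxblock_pow2_unit (V : 'I_2 -> 'M[F]_n) (g : 'I_2 -> 'I_2) :
  V ord0 - V ord_max \in unitmx -> injective g ->
  \mxblock_(a < 2, b < 2) (V a ^+ g b) \in unitmx.
Proof.
set P := V ord0; set Q := V ord_max => PQu g_inj; set D := invmx (P - Q).
pose W (c j : 'I_2) := if c == ord0 then (if j == ord0 then - (Q *m D) else 1%:M + Q *m D)
                       else (if j == ord0 then D else - D).
have DPQ : D *m (P - Q) = 1%:M by rewrite mulVmx.
have WV (c c' : 'I_2) : \sum_j W c j *m V j ^+ c' = if c == c' then 1%:M else 0.
  rewrite sum_ord2 -/P -/Q.
  case: c c' => [[|[|//]] hc] [[|[|//]] hc']; rewrite /W /= ?expr0 ?expr1 ?mulmx1.
  - by rewrite addrCA addNr addr0.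
  - rewrite mulNmx mulmxDl mul1mx addrCA [- _ + _]addrC -mulmxBr -mulmxA -opprB.
    by rewrite mulmxN DPQ mulmxN mulmx1 subrr.
  - by rewrite subrr.
  - by rewrite mulNmx -mulmxBr.
apply: (mxblock_unit_linv (Y := fun b => W (g b))) => a c.
by rewrite WV (inj_eq g_inj).
Qed.

Lemma subspace_condition2_pairwise k (A S : 'I_k -> 'M[F]_n) :
  (2 %| n)%N -> (forall i, A i \in unitmx) -> (forall i, \rank (S i) = (n %/ 2)%N) ->
  (forall i, (S i + S i *m A i == 1%:M)%MS) ->
  (forall i j, i != j -> (S i *m A j == S i)%MS) ->
  (forall i j, i != j -> A i - A j \in unitmx) ->
  subspace_condition 2 A S.
Proof.
move=> n2 Au rkS spanS invS Adiff; do !split => //.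
  by move=> i; rewrite big_ord_recl big_ord1 /= expr0 mulmx1 expr1.
move=> t f g f_inj g_inj; have := leq_card g g_inj; rewrite !card_ord.
case: t f g f_inj g_inj => [|[|[|//]]] f g f_inj g_inj _.
- by apply: (mxblock_unit_linv (Y := fun _ _ => 0)) => -[].
- have Apow_unit i (c : 'I_2) : A i ^+ c \in unitmx.
    by case: c => -[|[|//]] ?; rewrite ?expr0 ?expr1 ?unitmx1.
  apply: (mxblock_unit_linv (Y := fun _ _ => invmx (A (f ord0) ^+ g ord0))) => a c.
  by rewrite big_ord1 !ord1 eqxx mulVmx.
- apply: (mxblock_pow2_unit (V := A \o f)) => //; apply: Adiff.
  by apply/eqP => /f_inj.
Qed.
End BlockInverse.

Lemma eqmx_mul_unit_comm (F : fieldType) n (S : 'M[F]_n) (A : 'M[F]_n) :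
  A \in unitmx -> S *m A = A *m S -> (S *m A == S)%MS.
Proof.
move=> Au SA; apply/andP; split; first by rewrite SA submxMl.
by rewrite -{1}(mulKmx Au S) -SA submxMl.
Qed.

Lemma mxrank_add_orthogonal (F : fieldType) n (P Q : 'M[F]_n) :
  P + Q = 1%:M -> P *m Q = 0 -> (\rank P + \rank Q)%N = n.
Proof.
move=> PQ1 PQ0; apply/eqP; rewrite eqn_leq; apply/andP; split.
  by have := mxrank_mul_min P Q; rewrite PQ0 mxrank0 leqn0 subn_eq0.
by rewrite -{1}(mxrank1 F n) -PQ1 mxrank_add.
Qed.

Lemma ltn_half_ord m (i : 'I_(2 * m)) : (i./2 < m)%N.
Proof. by rewrite ltn_half_double -mul2n. Qed.

Definition ord_half m (i : 'I_(2 * m)) : 'I_m := Ordinal (ltn_half_ord i).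

Lemma ord_half_eq_odd m (i j : 'I_(2 * m)) :
  i != j -> ord_half i = ord_half j -> odd j = ~~ odd i.
Proof.
move=> ij /(congr1 val) /= ij_half.
case Ei: (odd i); case Ej: (odd j) => //; exfalso; move/eqP: ij; apply; apply: val_inj;
  by rewrite -[val i]odd_double_half -[val j]odd_double_half Ei Ej ij_half.
Qed.

Lemma exists_inj_avoid (T : finType) (x : T) m :
  (m < #|T|)%N -> exists2 f : 'I_m -> T, injective f & forall i, f i != x.
Proof.
move=> lt_m; have le_m : (m <= #|predC1 x|)%N by rewrite cardC1 -ltnS (ltn_predK lt_m).
exists (fun i => enum_val (widen_ord le_m i)).
  by move=> i j /enum_val_inj /(congr1 val) /= /val_inj.
by move=> i; have := enum_valP (widen_ord le_m i); rewrite inE.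
Qed.

Section LadderFamily.
Variables (F : fieldType) (m n : nat) (lam : 'I_m -> F) (N : 'I_m -> bool -> 'M[F]_n).
Hypotheses (lam_inj : injective lam) (lam_neq0 : forall p, lam p != 0).
Hypotheses (N_sq : forall p b, N p b *m N p b = 0)
  (N_anti : forall p b, N p b *m N p (~~ b) + N p (~~ b) *m N p b = 1%:M)
  (N_comm : forall p q b c, p != q -> N p b *m N q c = N q c *m N p b).

Definition Amx p b := (lam p)%:M + N p b.
Definition Smx p b := N p b *m N p (~~ b).

Lemma N_NN p b : N p b *m N p (~~ b) *m N p b = N p b.
Proof.
have -> : N p b *m N p (~~ b) = 1%:M - N p (~~ b) *m N p b by rewrite -(N_anti p b) addrK.
by rewrite mulmxBl mul1mx -mulmxA N_sq mulmx0 subr0.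
Qed.

Lemma rank_Smx p b : \rank (Smx p b) = (n %/ 2)%N.
Proof.
have rkP : \rank (N p b *m N p (~~ b)) = \rank (N p b).
  apply/anti_leq; rewrite mxrankM_maxl /=.
  by rewrite -{1}(N_NN p b) mxrankM_maxl.
have rkQ : \rank (N p (~~ b) *m N p b) = \rank (N p b).
  apply/anti_leq; rewrite mxrankM_maxr /=.
  by rewrite -{1}(N_NN p b) -mulmxA mxrankM_maxr.
have PQ0 : N p b *m N p (~~ b) *m (N p (~~ b) *m N p b) = 0.
  by rewrite mulmxA -(mulmxA (N p b)) N_sq mulmx0 mul0mx.
have := mxrank_add_orthogonal (N_anti p b) PQ0.
rewrite /Smx rkP rkQ; lia.
Qed.

Lemma N_expr2 p b : N p b ^+ 2 = 0.
Proof. by rewrite expr2 -mulmxE. Qed.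

Lemma Amx_unit p b : Amx p b \in unitmx.
Proof. exact: unitmx_scalar_add_nilpotent (N_expr2 p b). Qed.

Lemma Smx_Amx p b : Smx p b *m Amx p b = lam p *: Smx p b + N p b.
Proof. by rewrite mulmxDr mul_mx_scalar N_NN. Qed.

Lemma Smx_span p b : (Smx p b + Smx p b *m Amx p b == 1%:M)%MS.
Proof.
have NSA : (N p b <= Smx p b + Smx p b *m Amx p b)%MS.
  have -> : N p b = Smx p b *m Amx p b - lam p *: Smx p b by rewrite Smx_Amx addrC addKr.
  by rewrite addmx_sub ?addsmxSr // -scaleNr scalemx_sub ?addsmxSl.
apply/andP; split; first exact: submx1.
by rewrite -(N_anti p b) addmx_sub ?addsmxSl // (submx_trans (submxMl _ _) NSA).
Qed.

Lemma Smx_Amx_same p b : (Smx p b *m Amx p (~~ b) == Smx p b)%MS.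
Proof.
rewrite /Amx mulmxDr mul_mx_scalar /Smx -mulmxA N_sq mulmx0 addr0.
by apply/eqmxP; apply: eqmx_scale.
Qed.

Lemma Smx_Amx_diff p q b c : p != q -> (Smx p b *m Amx q c == Smx p b)%MS.
Proof.
move=> pq; apply: eqmx_mul_unit_comm (Amx_unit q c) _.
rewrite /Amx /Smx mulmxDr mulmxDl scalar_mxC; congr (_ + _).
by rewrite -mulmxA N_comm // mulmxA N_comm // -mulmxA.
Qed.

Lemma Amx_sub_same p b : Amx p b - Amx p (~~ b) \in unitmx.
Proof.
rewrite /Amx opprD addrACA subrr add0r.
have: (N p b - N p (~~ b)) *m (N p (~~ b) - N p b) = 1%:M.
  by rewrite mulmxBl !mulmxBr !N_sq subr0 sub0r opprK N_anti.
by case/mulmx1_unit.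
Qed.

Lemma Amx_sub_diff p q b c : p != q -> Amx p b - Amx q c \in unitmx.
Proof.
move=> pq; rewrite /Amx opprD addrACA -raddfB /=.
apply: unitmx_scalar_add_nilpotent.
  by rewrite subr_eq0; apply: contra pq => /eqP /lam_inj ->.
apply: (nilpotent_addr_comm (a := 2) (b := 2) _ (N_expr2 p b)); last by rewrite sqrrN N_expr2.
by rewrite /GRing.comm mulrN mulNr -!mulmxE N_comm.
Qed.

Lemma ladder_subspace_condition : (2 %| n)%N ->
  exists A S : 'I_(2 * m) -> 'M[F]_n, subspace_condition 2 A S.
Proof.
move=> n2; exists (fun i => Amx (ord_half i) (odd i)), (fun i => Smx (ord_half i) (odd i)).
apply: subspace_condition2_pairwise => // [i|i|i|i j ij|i j ij]; rewrite ?rank_Smx ?Smx_span ?Amx_unit //.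
- have [hij|hij] := eqVneq (ord_half i) (ord_half j); last exact: Smx_Amx_diff.
  by rewrite -hij (ord_half_eq_odd ij hij) Smx_Amx_same.
- have [hij|hij] := eqVneq (ord_half i) (ord_half j); last exact: Amx_sub_diff.
  by rewrite -hij (ord_half_eq_odd ij hij) Amx_sub_same.
Qed.
End LadderFamily.

Section PartialMapMatrix.
Variables (F : fieldType) (T : finType).

Definition pmap_mx (f : T -> option T) : 'M[F]_#|T| :=
  \matrix_(i, j) (f (enum_val i) == Some (enum_val j))%:R.

Lemma eq_pmap_mx f g : f =1 g -> pmap_mx f = pmap_mx g.
Proof. by move=> fg; apply/matrixP => i j; rewrite !mxE fg. Qed.

Lemma pmap_mx_none : pmap_mx (fun=> None) = 0.
Proof. by apply/matrixP => i j; rewrite !mxE. Qed.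

Lemma mul_pmap_mx f g : pmap_mx f *m pmap_mx g = pmap_mx (fun t => obind g (f t)).
Proof.
apply/matrixP => i k; rewrite !mxE.
case fi: (f (enum_val i)) => [t|] /=; last by rewrite big1 // => j _; rewrite mxE fi mul0r.
rewrite (bigD1 (enum_rank t)) //= big1 ?addr0 => [|j /negbTE nj].
  by rewrite !mxE fi enum_rankK eqxx mul1r.
rewrite mxE fi; have [[tj]|_] := eqVneq (Some t) (Some (enum_val j)); last by rewrite mul0r.
by move: nj; rewrite tj enum_valK eqxx.
Qed.

Lemma pmap_mx_split (P : pred T) :
  pmap_mx (fun t => if P t then Some t else None) +
  pmap_mx (fun t => if P t then None else Some t) = 1%:M.
Proof.
apply/matrixP => i j; rewrite !mxE -natrD.
by case: (P _); rewrite ?addn0 ?add0n (inj_eq Some_inj) (inj_eq enum_val_inj).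
Qed.
End PartialMapMatrix.

Section LadderOperators.
Variables (F : fieldType) (m : nat).
Implicit Types (p q : 'I_m) (t : {ffun 'I_m -> bool}).

Definition flip_bit p t : {ffun 'I_m -> bool} := [ffun j => (j == p) (+) t j].

Lemma flip_bit_at p t : flip_bit p t p = ~~ t p.
Proof. by rewrite ffunE eqxx. Qed.

Lemma flip_bit_other p q t : q != p -> flip_bit p t q = t q.
Proof. by rewrite ffunE => /negbTE ->. Qed.

Lemma flip_bitK p : involutive (flip_bit p).
Proof. by move=> t; apply/ffunP => j; rewrite !ffunE addbA addbb. Qed.

Lemma flip_bitC p q t : flip_bit p (flip_bit q t) = flip_bit q (flip_bit p t).
Proof. by apply/ffunP => j; rewrite !ffunE addbCA. Qed.

Definition toggle p b t := if t p == b then None else Some (flip_bit p t).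

Definition ladder_mx p b : 'M[F]_#|{ffun 'I_m -> bool}| := pmap_mx F (toggle p b).

Lemma ladder_mx_sq p b : ladder_mx p b *m ladder_mx p b = 0.
Proof.
rewrite mul_pmap_mx -(pmap_mx_none F); apply: eq_pmap_mx => t.
by rewrite /toggle; case: b; case tp: (t p); rewrite /= ?flip_bit_at ?tp.
Qed.

Lemma ladder_mx_anti p b :
  ladder_mx p b *m ladder_mx p (~~ b) + ladder_mx p (~~ b) *m ladder_mx p b = 1%:M.
Proof.
rewrite !mul_pmap_mx addrC -(pmap_mx_split F (fun t => t p == b)).
congr (_ + _); apply: eq_pmap_mx => t /=;
  by rewrite /toggle; case: b; case tp: (t p); rewrite /= ?flip_bit_at ?tp ?flip_bitK.
Qed.

Lemma ladder_mx_comm p q b c :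
  p != q -> ladder_mx p b *m ladder_mx q c = ladder_mx q c *m ladder_mx p b.
Proof.
move=> pq; have qp : q != p by rewrite eq_sym.
rewrite !mul_pmap_mx; apply: eq_pmap_mx => t; rewrite /toggle.
by case tpb: (t p == b); case tqc: (t q == c); rewrite /= ?flip_bit_other ?tpb ?tqc //= flip_bitC.
Qed.
End LadderOperators.

Theorem theorem4p9 (m : nat) (F : finFieldType) :
  (0 < m)%N -> (m.+1 <= #|F|)%N ->
  exists (A : 'I_(2 * m) -> 'M[F]_(2 ^ m)) (S : 'I_(2 * m) -> 'M[F]_(2 ^ m)),
    subspace_condition 2 A S.
Proof.
move=> m_gt0 card_F.
have [lam lam_inj lam_neq0] := exists_inj_avoid (0 : F) card_F.
have card_bits : #|{ffun 'I_m -> bool}| = (2 ^ m)%N.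
  by rewrite card_ffun card_bool card_ord.
rewrite -card_bits; apply: (ladder_subspace_condition lam_inj lam_neq0
  (@ladder_mx_sq F m) (@ladder_mx_anti F m) (@ladder_mx_comm F m)).
by rewrite card_bits dvdn_exp.
Qed.
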